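(* Let $\mathsf{X}$ be a retract of a qcb-space $\mathsf{Y}$. If $\mathsf{Y}$ satisfies Normann's condition, then so does $\mathsf{X}$.
   Context: A qcb-space is a topological quotient of a countably based space. $\mathsf{X}$ is a retract of $\mathsf{Y}$ if there are continuous $e\colon\mathsf{X}\to\mathsf{Y}$ and $r\colon\mathsf{Y}\to\mathsf{X}$ with $r\circ e=\mathrm{id}_{\mathsf{X}}$. A subset $A$ of a space $Z$ is functionally closed if $A=\varphi^{-1}[\{0\}]$ for some continuous $\varphi\colon Z\to[0,1]$. A space satisfies Normann's condition if every functionally closed subset is an intersection of clopen sets. *)

From mathcomp Require Import all_boot all_order all_algebra.
From mathcomp Require Import all_classical all_reals all_analysis.
From mathcomp Require Import Rstruct Rstruct_topology.
Import Order.TTheory GRing.Theory Num.Theory.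
Local Open Scope classical_set_scope.
Local Open Scope ring_scope.

Definition quotient_map (B Y : topologicalType) (q : B -> Y) : Prop :=
  (forall y : Y, exists b : B, q b = y) /\ forall U : set Y, open U <-> open (q @^-1` U).

Definition qcb_space (Y : topologicalType) : Prop :=
  exists (B : topologicalType) (q : B -> Y),
    @second_countable B /\ @quotient_map B Y q.

Definition retract_of (X Y : topologicalType) : Prop :=
  exists (e : X -> Y) (r : Y -> X),
    continuous e /\ continuous r /\ (forall x, r (e x) = x).

Definition functionally_closed (Z : topologicalType) (A : set Z) : Prop :=
  exists phi : Z -> Rdefinitions.R,
    continuous phi /\ (forall z, 0 <= phi z <= 1) /\
    A = phi @^-1` [set 0].

Definition normann_condition (Z : topologicalType) : Prop :=
  forall A : set Z, @functionally_closed Z A ->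
    exists F : set (set Z), (forall C, F C -> clopen C) /\
      A = \bigcap_(C in F) C.

From mathcomp Require Import all_boot all_order all_algebra.
From mathcomp Require Import all_classical all_reals all_analysis.
From mathcomp Require Import Rstruct Rstruct_topology.
Local Open Scope classical_set_scope.

(* If r : Y -> X retracts e : X -> Y, then A = e^-1(r^-1 A). The set r^-1 A is
   functionally closed in Y, hence an intersection of clopen sets C, and A is
   the intersection of the clopen sets e^-1 C. *)

Lemma functionally_closed_preimage {Y Z : topologicalType} {f : Y -> Z}
    {A : set Z} :
  continuous f -> functionally_closed Z A -> functionally_closed Y (f @^-1` A).
Proof.
move=> cf [phi [cphi [phi01 ->]]]; exists (phi \o f); split.
  by move=> y; apply: continuous_comp; [exact: cf | exact: cphi].
by split=> // y; exact: phi01.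
Qed.

Lemma normann_condition_retract (X Y : topologicalType) :
  retract_of X Y -> normann_condition Y -> normann_condition X.
Proof.
move=> [e [r [ce [cr re]]]] NY A fcA.
have -> : A = e @^-1` (r @^-1` A) by apply/seteqP; split=> x /=; rewrite re.
have [F [Fclopen ->]] := NY _ (functionally_closed_preimage cr fcA).
exists [set e @^-1` C | C in F]; split.
  by move=> _ [C FC <-]; exact: preimage_clopen (Fclopen C FC) ce.
by rewrite preimage_bigcap bigcap_image.
Qed.

Theorem lemma4p1 (X Y : topologicalType) :
  qcb_space Y -> retract_of X Y -> normann_condition Y -> normann_condition X.
Proof. by move=> _; exact: normann_condition_retract. Qed.
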